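(* Let $\kappa:\mathbb{R}^d\times\mathbb{R}^d\to\mathbb{R}$ be a kernel with reproducing kernel Hilbert space $\mathcal{H}_\kappa$, and assume $\kappa(\mathbf{x},\mathbf{x})=1$ for all $\mathbf{x}$. Let $(\mathbf{x}_1,y_1),\ldots,(\mathbf{x}_T,y_T)$ be a sequence of examples with $\mathbf{x}_t\in\mathbb{R}^d$ and $y_t\in\{-1,+1\}$, and let $\ell_t(f)=\max(0,1-y_tf(\mathbf{x}_t))$ be the hinge loss, assumed $1$-Lipschitz with respect to $\|\cdot\|_{\mathcal{H}_\kappa}$. Let $f_*\in\arg\min_{f\in\mathcal{H}_\kappa}\sum_{t=1}^T\ell_t(f)$. Let $\beta\ge\alpha>0$ and $\eta>0$, and let $f_1,\ldots,f_T$ be generated by the SPA (Sparse Passive Aggressive) update described in the context. Then $$\mathbb{E}\Big[\sum_{t=1}^T\big(\ell_t(f_t)-\ell_t(f_* )\big)\Big]<\frac{1}{2\eta}\|f_*\|^2_{\mathcal{H}_\kappa}+\frac{\eta\beta}{\min(\alpha,\sqrt{\beta\eta})}\,T .$$ Moreover, if $\eta=\|f_*\|_{\mathcal{H}_\kappa}\sqrt{\frac{\alpha}{2\beta T}}$ and $\alpha^3\le\frac{\beta}{2T}\|f_*\|^2_{\mathcal{H}_\kappa}$, then $$\mathbb{E}\Big[\sum_{t=1}^T\big(\ell_t(f_t)-\ell_t(f_* )\big)\Big]<\|f_*\|_{\mathcal{H}_\kappa}\sqrt{2\beta T/\alpha}.$$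
   Context: SPA update (single kernel): start with $f_1=0\in\mathcal{H}_\kappa$. At each round $t=1,\ldots,T$, compute $\rho_t=\min(\alpha,\ell_t(f_t))/\beta$ and draw a random variable $Z_t\in\{0,1\}$ with $\Pr(Z_t=1\mid Z_1,\ldots,Z_{t-1})=\rho_t$. Then set $$f_{t+1}=\arg\min_{f\in\mathcal{H}_\kappa}\ \frac12\|f-f_t\|^2_{\mathcal{H}_\kappa}+\frac{Z_t}{\rho_t}\,\eta\,\ell_t(f),$$ with the convention $Z_t/\rho_t=0$ when $\rho_t=0$. Equivalently, $f_{t+1}=f_t+\tau_ty_t\kappa(\mathbf{x}_t,\cdot)$ with $\tau_t=\min\big(\eta Z_t/\rho_t,\ \ell_t(f_t)/\kappa(\mathbf{x}_t,\mathbf{x}_t)\big)$. The expectation is over the random variables $Z_1,\ldots,Z_T$. *)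

From HB Require Import structures.
From mathcomp Require Import all_boot all_order all_algebra.
From mathcomp Require Import reals.
Set Implicit Arguments. Unset Strict Implicit. Unset Printing Implicit Defensive.
Import Order.TTheory GRing.Theory Num.Theory.
Local Open Scope ring_scope.

Section SPA.
Variables (R : realType) (d : nat) (H : lmodType R).

Definition is_inner_product (ip : H -> H -> R) : Prop :=
  (forall f g, ip f g = ip g f) /\
  (forall a f g h, ip (a *: f + g) h = a * ip f h + ip g h) /\
  (forall f, 0 <= ip f f) /\
  (forall f, ip f f = 0 -> f = 0).

Definition hnorm (ip : H -> H -> R) (f : H) : R := Num.sqrt (ip f f).

Definition hcomplete (ip : H -> H -> R) : Prop :=
  forall u : nat -> H,
    (forall e, 0 < e -> exists N, forall m n, (N <= m)%N -> (N <= n)%N ->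
        hnorm ip (u m - u n) < e) ->
    exists l, forall e, 0 < e -> exists N, forall n, (N <= n)%N ->
        hnorm ip (u n - l) < e.

(* Elements of H are functions R^d -> R via the
   injective linear evaluation map ev; kx x is the element kappa(x, .) of H,
   and the reproducing property f(x) = <f, kappa(x,.)> holds. *)
Definition is_RKHS (kappa : 'rV[R]_d -> 'rV[R]_d -> R) (ip : H -> H -> R)
    (ev : H -> 'rV[R]_d -> R) (kx : 'rV[R]_d -> H) : Prop :=
  is_inner_product ip /\ hcomplete ip /\
  injective ev /\
  (forall a f g u, ev (a *: f + g) u = a * ev f u + ev g u) /\
  (forall u v, ev (kx u) v = kappa u v) /\
  (forall f u, ev f u = ip f (kx u)).

Variables (kappa : 'rV[R]_d -> 'rV[R]_d -> R) (ev : H -> 'rV[R]_d -> R)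
  (kx : 'rV[R]_d -> H) (x : nat -> 'rV[R]_d) (y : nat -> R).

(* Hinge loss of round t (rounds are indexed 0 .. T-1). *)
Definition hinge (t : nat) (f : H) : R := Num.max 0 (1 - y t * ev f (x t)).

Variables (alpha beta eta : R).

(* SPA iterates f_t (f_0 = 0), as a function of the coin flips z. *)
Fixpoint spa_f (z : nat -> bool) (t : nat) : H :=
  match t with
  | 0 => 0
  | t'.+1 =>
    let ft := spa_f z t' in
    let l := hinge t' ft in
    let rho := Num.min alpha l / beta in
    let zr := if rho == 0 then 0 else (z t')%:R / rho in
    let tau := Num.min (eta * zr) (l / kappa (x t') (x t')) in
    ft + (tau * y t') *: kx (x t')
  end.

(* Sampling probability rho_t (depends on z_0 .. z_{t-1} only). *)
Definition spa_rho (z : nat -> bool) (t : nat) : R :=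
  Num.min alpha (hinge t (spa_f z t)) / beta.

(* Probability of the coin-flip outcome z = (Z_0, ..., Z_{T-1}):
   Pr(Z_t = 1 | Z_0..Z_{t-1}) = rho_t. *)
Definition spa_prob (T : nat) (z : T.-tuple bool) : R :=
  \prod_(t < T) (if nth false z t then spa_rho (nth false z) t
                 else 1 - spa_rho (nth false z) t).

Definition spa_regret (T : nat) (g : H) (z : nat -> bool) : R :=
  \sum_(t < T) (hinge t (spa_f z t) - hinge t g).

Definition spa_expected_regret (T : nat) (g : H) : R :=
  \sum_(z : T.-tuple bool) spa_prob z * spa_regret T g (nth false z).

End SPA.

From HB Require Import structures.
From mathcomp Require Import all_boot all_order all_algebra.
From mathcomp Require Import reals.
From mathcomp Require Import ring lra.
Set Implicit Arguments. Unset Strict Implicit. Unset Printing Implicit Defensive.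
Import Order.TTheory GRing.Theory Num.Theory.
Local Open Scope ring_scope.

(** Conditionally on the past, one round of SPA changes the potential
    [eta * (regret so far) + ||f_t - f_*||^2 / 2] in expectation by at most
    [eta * tau_t - rho_t * tau_t^2 / 2], where [tau_t = min (eta / rho_t) l_t(f_t)]
    is the step taken when [Z_t = 1].  For [c = eta / rho_t] the
    passive-aggressive step on the hinge loss satisfies
    [c (l_t(f_t) - l_t(g)) <= tau_t (y_t g(x_t) - y_t f_t(x_t) + c - tau_t)],
    which after multiplication by [rho_t] absorbs the cross term of the squared
    distance.  Moreover [tau_t <= eta beta / min(alpha, sqrt(beta eta))], since
    either [l_t >= alpha] or [min (eta beta / l_t) l_t <= sqrt(beta eta)].
    Summing over the rounds with the tower property bounds [eta E[regret]] by
    [||f_*||^2/2 + T eta^2 beta / min(alpha, sqrt(beta eta))], strictly because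
    the first round ([f_1 = 0], loss [1]) has positive slack [rho_1 tau_1^2 / 2].
    The tuned bound is this one at the given [eta], where the hypothesis on
    [alpha^3] makes [min(alpha, sqrt(beta eta)) = alpha]. *)

Section RealInequalities.
Variable R : rcfType.

Lemma hinge_pa_step (c u v : R) : 0 <= c -> 0 < 1 - u ->
  c * ((1 - u) - Num.max 0 (1 - v))
  <= Num.min c (1 - u) * (v - u + c - Num.min c (1 - u)).
Proof.
move=> c_ge0 u_lt1.
have [v1|v1] := leP 0 (1 - v); have [cu|cu] := leP c (1 - u); nra.
Qed.

Lemma minr_div_le_sqrt (A l : R) :
  0 < A -> 0 < l -> Num.min (A / l) l <= Num.sqrt A.
Proof.
move=> A_gt0 l_gt0.
have s_gt0 : 0 < Num.sqrt A by rewrite sqrtr_gt0.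
have sA : Num.sqrt A ^+ 2 = A by rewrite sqr_sqrtr // ltW.
have [ls|sl] := leP l (Num.sqrt A); first by rewrite ge_min ls orbT.
rewrite ge_min ler_pdivrMr //; nra.
Qed.

Lemma pa_step_size_le (alpha beta eta l : R) :
  0 < alpha -> 0 < beta -> 0 < eta -> 0 <= l ->
  Num.min (eta / (Num.min alpha l / beta)) l
  <= eta * beta / Num.min alpha (Num.sqrt (beta * eta)).
Proof.
move=> alpha_gt0 beta_gt0 eta_gt0 l_ge0.
set m := Num.min alpha (Num.sqrt _).
have m_gt0 : 0 < m by rewrite /m lt_min alpha_gt0 sqrtr_gt0 mulr_gt0.
have A_gt0 : 0 < eta * beta by rewrite mulr_gt0.
have [->|l_neq0] := eqVneq l 0.
  rewrite (min_r (ltW alpha_gt0)) mul0r invr0 mulr0 minxx.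
  by rewrite divr_ge0 ?ltW.
have l_gt0 : 0 < l by rewrite lt_def l_neq0.
rewrite invf_div mulrA.
have [al|la] := leP alpha l.
  rewrite ge_min ler_pM2l // lef_pV2 ?posrE //.
  by rewrite ge_min lexx.
apply: le_trans (minr_div_le_sqrt A_gt0 l_gt0) _.
have s_gt0 : 0 < Num.sqrt (eta * beta) by rewrite sqrtr_gt0.
have ss : Num.sqrt (eta * beta) * Num.sqrt (eta * beta) = eta * beta.
  by rewrite -expr2 sqr_sqrtr // ltW.
have ms : m <= Num.sqrt (eta * beta) by rewrite /m mulrC ge_min lexx orbT.
rewrite ler_pdivlMr //; nra.
Qed.

Lemma tuned_regret_bound (N alpha beta eta Tr : R) :
  0 < alpha -> 0 < beta -> 0 < Tr -> 0 < eta -> 0 <= N ->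
  eta = N * Num.sqrt (alpha / (2 * beta * Tr)) ->
  alpha ^+ 3 <= beta / (2 * Tr) * N ^+ 2 ->
  N ^+ 2 / (2 * eta) + eta * beta / Num.min alpha (Num.sqrt (beta * eta)) * Tr
  = N * Num.sqrt (2 * beta * Tr / alpha).
Proof.
move=> alpha_gt0 beta_gt0 Tr_gt0 eta_gt0 N_ge0 etaE alpha3.
set s := Num.sqrt _ in etaE.
have q_gt0 : 0 < alpha / (2 * beta * Tr) by rewrite divr_gt0 // !mulr_gt0.
have s_gt0 : 0 < s by rewrite sqrtr_gt0.
have s2 : s ^+ 2 = alpha / (2 * beta * Tr) by rewrite sqr_sqrtr // ltW.
have N_gt0 : 0 < N by move: eta_gt0; rewrite etaE pmulr_lgt0.
have alphaE : alpha = s ^+ 2 * (2 * beta * Tr).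
  by rewrite s2 divfK // gt_eqF // !mulr_gt0.
have alpha_le : alpha <= Num.sqrt (beta * eta).
  have be_ge0 : 0 <= beta * eta by rewrite mulr_ge0 // ltW.
  rewrite -(ger0_norm (ltW alpha_gt0)) -sqrtr_sqr ler_sqrt //.
  rewrite -ler_sqr ?nnegrE ?sqr_ge0 // -exprM.
  have -> : (beta * eta) ^+ 2 = alpha * (beta / (2 * Tr) * N ^+ 2).
    rewrite etaE !exprMn s2; field; rewrite !gt_eqF //.
  by rewrite (_ : (2 * 2)%N = 3.+1) // exprS ler_pM2l.
have sqrtE : Num.sqrt (2 * beta * Tr / alpha) = s^-1.
  by rewrite -sqrtrV ?ltW // invf_div.
rewrite (min_l alpha_le) sqrtE etaE alphaE.
by field; rewrite !gt_eqF.
Qed.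

End RealInequalities.

Lemma sum_tuple0 (V : nmodType) (G : 0.-tuple bool -> V) :
  \sum_(w : 0.-tuple bool) G w = G [tuple].
Proof. by rewrite (big_pred1 [tuple]) // => w; apply/esym/eqP; exact: tuple0. Qed.

Lemma sum_tuple_rcons (V : nmodType) n (G : n.+1.-tuple bool -> V) :
  \sum_(z : n.+1.-tuple bool) G z =
  \sum_(w : n.-tuple bool) (G [tuple of rcons w true] + G [tuple of rcons w false]).
Proof.
pose h (p : n.-tuple bool * bool) : n.+1.-tuple bool := [tuple of rcons p.1 p.2].
pose g (z : n.+1.-tuple bool) : n.-tuple bool * bool :=
  ([tuple of belast (thead z) (behead z)], last (thead z) (behead z)).
have hK : cancel g h.
  by move=> z; apply: val_inj => /=; rewrite -lastI [in RHS](tuple_eta z).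
have gK : cancel h g.
  move=> [w b]; have /= := congr1 val (hK (h (w, b))).
  case/rcons_inj => ew eb; rewrite /g /h /= in ew eb *.
  by congr pair; [apply: val_inj; exact: ew | exact: eb].
rewrite (reindex h) /=; last by exists g => ? _.
rewrite -(pair_big xpredT xpredT (fun w b => G (h (w, b)))) /=.
by apply: eq_bigr => w _; rewrite big_bool.
Qed.

Lemma nth_rcons_tuple_lt (A : Type) (a0 : A) n (w : n.-tuple A) b i :
  (i < n)%N -> nth a0 [tuple of rcons w b] i = nth a0 w i.
Proof. by move=> lt_in; rewrite /= nth_rcons size_tuple lt_in. Qed.

Lemma nth_rcons_tuple_last (A : Type) (a0 : A) n (w : n.-tuple A) b :
  nth a0 [tuple of rcons w b] n = b.
Proof. by rewrite /= nth_rcons size_tuple ltnn eqxx. Qed.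

Section CausalCoins.
Variables (R : realType) (rho : (nat -> bool) -> nat -> R).
Hypothesis rho_causal : forall z z' t,
  (forall i, (i < t)%N -> z i = z' i) -> rho z t = rho z' t.

Definition coin_prob n (w : n.-tuple bool) : R :=
  \prod_(t < n) (if nth false w t then rho (nth false w) t
                 else 1 - rho (nth false w) t).

Lemma coin_prob_rcons n (w : n.-tuple bool) b :
  coin_prob [tuple of rcons w b]
  = coin_prob w * (if b then rho (nth false w) n else 1 - rho (nth false w) n).
Proof.
have prefix t :
    (t <= n)%N -> rho (nth false [tuple of rcons w b]) t = rho (nth false w) t.
  move=> le_tn; apply: rho_causal => i lt_it.
  by rewrite nth_rcons_tuple_lt // (leq_trans lt_it).
rewrite /coin_prob big_ord_recr /= nth_rcons_tuple_last prefix //.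
congr (_ * _); apply: eq_bigr => i _.
by rewrite nth_rcons_tuple_lt // prefix // ltnW.
Qed.

Lemma expectation_rcons n (G : n.+1.-tuple bool -> R) :
  \sum_(z : n.+1.-tuple bool) coin_prob z * G z
  = \sum_(w : n.-tuple bool) coin_prob w *
      (rho (nth false w) n * G [tuple of rcons w true]
       + (1 - rho (nth false w) n) * G [tuple of rcons w false]).
Proof.
rewrite sum_tuple_rcons; apply: eq_bigr => w _.
by rewrite !coin_prob_rcons; ring.
Qed.

Lemma sum_coin_prob n : \sum_(w : n.-tuple bool) coin_prob w = 1.
Proof.
elim: n => [|n IH]; first by rewrite sum_tuple0 /coin_prob big_ord0.
under eq_bigr do rewrite -[coin_prob _]mulr1.
by rewrite expectation_rcons -[RHS]IH; apply: eq_bigr => w _; ring.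
Qed.

Lemma coin_prob_ge0 n (w : n.-tuple bool) :
  (forall z t, 0 <= rho z t <= 1) -> 0 <= coin_prob w.
Proof.
move=> rho01; apply: prodr_ge0 => t _.
by case: ifP => _; have /andP[? ?] := rho01 (nth false w) t; rewrite ?subr_ge0.
Qed.

End CausalCoins.

Section InnerProduct.
Variables (R : realType) (H : lmodType R) (ip : H -> H -> R).
Hypothesis ip_inner : is_inner_product ip.

Lemma ipC f g : ip f g = ip g f.
Proof. by case: ip_inner => ->. Qed.

Lemma ipZDl a f g h : ip (a *: f + g) h = a * ip f h + ip g h.
Proof. by case: ip_inner => _ [->]. Qed.

Lemma ipxx_ge0 f : 0 <= ip f f.
Proof. by case: ip_inner => _ [_ [->]]. Qed.

Lemma ip0l h : ip 0 h = 0.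
Proof.
have := ipZDl 1 0 0 h; rewrite scaler0 addr0 mul1r => e.
by apply: (addrI (ip 0 h)); rewrite addr0 -e.
Qed.

Lemma ipDl f g h : ip (f + g) h = ip f h + ip g h.
Proof. by rewrite -{1}[f]scale1r ipZDl mul1r. Qed.

Lemma ipZl a f h : ip (a *: f) h = a * ip f h.
Proof. by rewrite -[a *: f]addr0 ipZDl ip0l addr0. Qed.

Lemma ipNl f h : ip (- f) h = - ip f h.
Proof. by rewrite -scaleN1r ipZl mulN1r. Qed.

Lemma ipBl f g h : ip (f - g) h = ip f h - ip g h.
Proof. by rewrite ipDl ipNl. Qed.

Lemma ip_addZ f a k :
  ip (f + a *: k) (f + a *: k) = ip f f + 2 * a * ip f k + a ^+ 2 * ip k k.
Proof.
by rewrite !ipDl !ipZl ![ip _ (_ + _)]ipC !ipDl !ipZl (ipC k f); ring.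
Qed.

Lemma hnorm_sqr f : hnorm ip f ^+ 2 = ip f f.
Proof. by rewrite sqr_sqrtr ?ipxx_ge0. Qed.

End InnerProduct.

Section Reproducing.
Variables (R : realType) (d : nat) (H : lmodType R) (ip : H -> H -> R).
Variables (kappa : 'rV[R]_d -> 'rV[R]_d -> R) (ev : H -> 'rV[R]_d -> R).
Variable kx : 'rV[R]_d -> H.
Hypothesis rkhs : is_RKHS kappa ip ev kx.

Lemma rkhs_inner : is_inner_product ip.
Proof. by case: rkhs. Qed.

Lemma ev_ip f u : ev f u = ip f (kx u).
Proof. by case: rkhs => _ [_ [_ [_ [_ ->]]]]. Qed.

Lemma ip_kx u v : ip (kx u) (kx v) = kappa u v.
Proof. by case: rkhs => _ [_ [_ [_ [<- _]]]]; rewrite ev_ip. Qed.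

Lemma ev0 u : ev 0 u = 0.
Proof. by rewrite ev_ip (ip0l rkhs_inner). Qed.

Lemma evB f g u : ev (f - g) u = ev f u - ev g u.
Proof. by rewrite !ev_ip (ipBl rkhs_inner). Qed.

End Reproducing.

Section SPA.
Variables (R : realType) (d : nat) (kappa : 'rV[R]_d -> 'rV[R]_d -> R)
  (H : lmodType R) (ip : H -> H -> R) (ev : H -> 'rV[R]_d -> R)
  (kx : 'rV[R]_d -> H) (T : nat) (x : nat -> 'rV[R]_d) (y : nat -> R)
  (fstar : H) (alpha beta eta : R).
Hypotheses (rkhs : is_RKHS kappa ip ev kx) (kappa_diag : forall u, kappa u u = 1)
  (y_sign : forall t, (t < T)%N -> y t = 1 \/ y t = -1)
  (alpha_gt0 : 0 < alpha) (alpha_le_beta : alpha <= beta) (eta_gt0 : 0 < eta).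

Local Notation f_ := (spa_f kappa ev kx x y alpha beta eta).
Local Notation rho := (spa_rho kappa ev kx x y alpha beta eta).
Local Notation loss := (hinge ev x y).
Local Notation regret := (spa_regret kappa ev kx x y alpha beta eta).
Local Notation prob := (spa_prob kappa ev kx x y alpha beta eta).

(* For [rho z t = 0] the junk value [eta / 0 = 0] gives [spa_tau z t = 0],
   matching the convention [Z_t / rho_t = 0] of the update. *)
Definition spa_tau z t := Num.min (eta / rho z t) (loss t (f_ z t)).
Definition spa_dist z t := ip (f_ z t - fstar) (f_ z t - fstar).
Definition spa_slack z t := rho z t * spa_tau z t ^+ 2 / 2.
Definition spa_drift := eta * (eta * beta / Num.min alpha (Num.sqrt (beta * eta))).
Definition spa_potential z n := eta * regret n fstar z + spa_dist z n / 2.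
Definition spa_expected_potential n :=
  \sum_(w : n.-tuple bool) prob w * spa_potential (nth false w) n.

Lemma hinge_ge0 t f : 0 <= loss t f.
Proof. by rewrite le_max lexx. Qed.

Lemma beta_gt0 : 0 < beta.
Proof. exact: lt_le_trans alpha_le_beta. Qed.

Section Causality.
Variables (z z' : nat -> bool).

Lemma spa_f_causal t : (forall i, (i < t)%N -> z i = z' i) -> f_ z t = f_ z' t.
Proof.
elim: t => [|t IH] agree //=.
by rewrite IH ?agree // => i lt_it; apply: agree; exact: ltnW.
Qed.

Variable t : nat.
Hypothesis agree : forall i, (i < t)%N -> z i = z' i.

Lemma spa_rho_causal : rho z t = rho z' t.
Proof. by rewrite /spa_rho (spa_f_causal agree). Qed.

Lemma spa_tau_causal : spa_tau z t = spa_tau z' t.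
Proof. by rewrite /spa_tau spa_rho_causal (spa_f_causal agree). Qed.

Lemma spa_dist_causal : spa_dist z t = spa_dist z' t.
Proof. by rewrite /spa_dist (spa_f_causal agree). Qed.

Lemma spa_slack_causal : spa_slack z t = spa_slack z' t.
Proof. by rewrite /spa_slack spa_rho_causal spa_tau_causal. Qed.

Lemma spa_regret_causal g : regret t g z = regret t g z'.
Proof.
apply: eq_bigr => s _; congr (loss _ _ - _); apply: spa_f_causal => i lt_is.
exact/agree/(ltn_trans lt_is).
Qed.

End Causality.

Lemma spa_rho_bounds z t : 0 <= rho z t <= 1.
Proof.
rewrite divr_ge0 ?le_min ?(ltW alpha_gt0) ?(ltW beta_gt0) ?hinge_ge0 //=.
by rewrite ler_pdivrMr ?beta_gt0 // mul1r ge_min alpha_le_beta.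
Qed.

Lemma spa_slack_ge0 z t : 0 <= spa_slack z t.
Proof.
have /andP[rho_ge0 _] := spa_rho_bounds z t.
by rewrite /spa_slack divr_ge0 // mulr_ge0 ?sqr_ge0.
Qed.

Lemma spa_f_succ z t :
  f_ z t.+1 = f_ z t + ((z t)%:R * spa_tau z t * y t) *: kx (x t).
Proof.
rewrite [in LHS]/= kappa_diag divr1 /spa_tau /spa_rho; congr (_ + (_ * _) *: _).
case: (z t) => /=; case: eqP => [->|_];
  rewrite ?invr0 ?mulr1n ?mulr0n ?(mul1r, div1r, mul0r, mulr0) //.
all: exact/min_l/hinge_ge0.
Qed.

Lemma spa_tau_le z t :
  spa_tau z t <= eta * beta / Num.min alpha (Num.sqrt (beta * eta)).
Proof. exact: pa_step_size_le beta_gt0 eta_gt0 (hinge_ge0 _ _). Qed.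

Lemma spa_step_gain z t :
  eta * (loss t (f_ z t) - loss t fstar)
  + rho z t * spa_tau z t * (y t * (ev (f_ z t) (x t) - ev fstar (x t)))
  + rho z t * spa_tau z t ^+ 2 <= eta * spa_tau z t.
Proof.
rewrite /spa_tau; set l := loss t (f_ z t); set r := rho z t.
have l_ge0 : 0 <= l := hinge_ge0 t (f_ z t).
have [r0|r_neq0] := eqVneq r 0.
  have l0 : l = 0.
    move: r0; rewrite /r /spa_rho -/l => /eqP.
    rewrite mulf_eq0 invr_eq0 (gt_eqF beta_gt0) orbF.
    by have [_|] := leP alpha l; [rewrite (gt_eqF alpha_gt0) | move=> _ /eqP].
  rewrite r0 l0 invr0 mulr0 minxx !mul0r !addr0 sub0r mulrN mulr0 oppr_le0.
  exact/mulr_ge0/hinge_ge0/ltW.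
have r_gt0 : 0 < r by rewrite lt_def r_neq0; case/andP: (spa_rho_bounds z t).
have l_gt0 : 0 < l.
  move: r_gt0; rewrite /r /spa_rho -/l pmulr_lgt0 ?invr_gt0 ?beta_gt0 //.
  by rewrite lt_min => /andP[].
have lE : l = 1 - y t * ev (f_ z t) (x t).
  by move: l_gt0; rewrite /l /hinge lt_max ltxx /= => /ltW; exact: max_r.
have c_ge0 : 0 <= eta / r by rewrite divr_ge0 // ltW.
have rc : r * (eta / r) = eta by rewrite mulrCA divff ?mulr1.
have u_lt1 : 0 < 1 - y t * ev (f_ z t) (x t) by rewrite -lE.
have := ler_wpM2l (ltW r_gt0) (hinge_pa_step (y t * ev fstar (x t)) c_ge0 u_lt1).
rewrite -lE -/(loss t fstar); set tau := Num.min _ _ => key.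
rewrite mulrA rc in key.
have -> : eta * tau = r * (tau * (eta / r)) by rewrite mulrCA rc mulrC.
nra.
Qed.

Lemma spa_dist_succ z t : (t < T)%N ->
  spa_dist z t.+1 = spa_dist z t
    + (z t)%:R * (2 * spa_tau z t * (y t * (ev (f_ z t) (x t) - ev fstar (x t)))
                  + spa_tau z t ^+ 2).
Proof.
move=> lt_tT.
have y2 : y t ^+ 2 = 1 by case: (y_sign lt_tT) => ->; rewrite ?sqrrN expr1n.
have ip_inner := rkhs_inner rkhs.
rewrite /spa_dist spa_f_succ addrAC (ip_addZ ip_inner) (ip_kx rkhs) kappa_diag.
rewrite -(ev_ip rkhs) (evB rkhs) !exprMn y2.
by case: (z t) => /=; ring.
Qed.

Lemma spa_expected_step (z z1 z0 : nat -> bool) t : (t < T)%N ->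
  (forall i, (i < t)%N -> z1 i = z i) -> (forall i, (i < t)%N -> z0 i = z i) ->
  z1 t -> ~~ z0 t ->
  eta * (loss t (f_ z t) - loss t fstar)
    + rho z t * (spa_dist z1 t.+1 / 2) + (1 - rho z t) * (spa_dist z0 t.+1 / 2)
  <= spa_dist z t / 2 + spa_drift - spa_slack z t.
Proof.
move=> lt_tT agree1 agree0 z1t z0t.
rewrite !spa_dist_succ // z1t (negbTE z0t).
rewrite (spa_dist_causal agree1) (spa_dist_causal agree0).
rewrite (spa_tau_causal agree1) (spa_f_causal agree1) /spa_slack /spa_drift.
have gain := spa_step_gain z t.
have := ler_wpM2l (ltW eta_gt0) (spa_tau_le z t).
rewrite /=; lra.
Qed.

Lemma spa_regret_succ g z n :
  regret n.+1 g z = regret n g z + (loss n (f_ z n) - loss n g).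
Proof. by rewrite /spa_regret big_ord_recr. Qed.

Lemma spa_expected_potential_succ n : (n < T)%N ->
  spa_expected_potential n.+1
  <= spa_expected_potential n + spa_drift
     - \sum_(w : n.-tuple bool) prob w * spa_slack (nth false w) n.
Proof.
move=> lt_nT.
have rho_causal := @spa_rho_causal.
have -> : spa_expected_potential n + spa_drift
    - \sum_(w : n.-tuple bool) prob w * spa_slack (nth false w) n
  = \sum_(w : n.-tuple bool)
      prob w * (spa_potential (nth false w) n + spa_drift - spa_slack (nth false w) n).
  under [RHS]eq_bigr do rewrite mulrBr mulrDr.
  by rewrite sumrB big_split -mulr_suml (sum_coin_prob rho_causal) mul1r.
rewrite /spa_expected_potential (expectation_rcons rho_causal).
apply: ler_sum => w _.
apply: ler_wpM2l; first exact/coin_prob_ge0/spa_rho_bounds.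
have agree b i : (i < n)%N -> nth false [tuple of rcons w b] i = nth false w i.
  exact: nth_rcons_tuple_lt.
rewrite /spa_potential !spa_regret_succ !(spa_regret_causal (agree _)).
rewrite !(spa_f_causal (agree _)).
have := spa_expected_step lt_nT (agree true) (agree false)
  (nth_rcons_tuple_last _ _ _) (negbT (nth_rcons_tuple_last _ _ _)).
lra.
Qed.

Lemma spa_slack0_gt0 z : 0 < spa_slack z 0.
Proof.
have loss0 : loss 0 (f_ z 0) = 1.
  by rewrite /hinge /= (ev0 rkhs) mulr0 subr0 max_r ?ler01.
have rho0 : 0 < rho z 0.
  by rewrite /spa_rho loss0 divr_gt0 ?beta_gt0 // lt_min alpha_gt0 ltr01.
rewrite /spa_slack /spa_tau loss0 divr_gt0 // mulr_gt0 // exprn_gt0 //.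
by rewrite lt_min ltr01 andbT divr_gt0.
Qed.

Lemma spa_expected_potential0 : spa_expected_potential 0 = ip fstar fstar / 2.
Proof.
rewrite /spa_expected_potential sum_tuple0 /spa_prob /spa_potential /spa_regret.
rewrite !big_ord0 mulr0 add0r mul1r /spa_dist /= add0r.
have ip_inner := rkhs_inner rkhs.
by rewrite (ipNl ip_inner) (ipC ip_inner) (ipNl ip_inner) opprK.
Qed.

Lemma spa_expected_potential_le n : (n < T)%N ->
  spa_expected_potential n.+1
  <= ip fstar fstar / 2 + n.+1%:R * spa_drift - spa_slack (fun _ => false) 0.
Proof.
elim: n => [|n IH] lt_nT; apply: le_trans (spa_expected_potential_succ lt_nT) _.
  rewrite spa_expected_potential0 sum_tuple0 /spa_prob big_ord0 mul1r mul1r.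
  by rewrite (@spa_slack_causal _ (fun _ => false) 0).
have := IH (ltnW lt_nT).
have : 0 <= \sum_(w : n.+1.-tuple bool) prob w * spa_slack (nth false w) n.+1.
  apply: sumr_ge0 => w _; apply: mulr_ge0; last exact: spa_slack_ge0.
  exact/coin_prob_ge0/spa_rho_bounds.
rewrite -[n.+2]addn1 natrD mulrDl mul1r; lra.
Qed.

Lemma spa_expected_regret_lt : (0 < T)%N ->
  spa_expected_regret kappa ev kx x y alpha beta eta T fstar
  < hnorm ip fstar ^+ 2 / (2 * eta)
    + eta * beta / Num.min alpha (Num.sqrt (beta * eta)) * T%:R.
Proof.
move=> T_gt0.
have ip_inner := rkhs_inner rkhs.
have regret_le : eta * spa_expected_regret kappa ev kx x y alpha beta eta T fstar
                 <= spa_expected_potential T.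
  rewrite /spa_expected_regret mulr_sumr; apply: ler_sum => z _.
  have : 0 <= prob z * (spa_dist (nth false z) T / 2).
    rewrite mulr_ge0 ?divr_ge0 ?(ipxx_ge0 ip_inner) //.
    exact/coin_prob_ge0/spa_rho_bounds.
  rewrite /spa_potential; lra.
have := @spa_expected_potential_le T.-1; rewrite ltn_predL prednK // => /(_ T_gt0).
move: (spa_slack0_gt0 (fun _ => false)) => slack0_gt0 potential_le.
rewrite -(ltr_pM2l eta_gt0) (hnorm_sqr ip_inner).
have -> : eta * (ip fstar fstar / (2 * eta)
                 + eta * beta / Num.min alpha (Num.sqrt (beta * eta)) * T%:R)
          = ip fstar fstar / 2 + T%:R * spa_drift.
  rewrite /spa_drift; field.
  by rewrite !gt_eqF // lt_min alpha_gt0 sqrtr_gt0 mulr_gt0 ?beta_gt0.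
lra.
Qed.

End SPA.

Unset Implicit Arguments.

Theorem lemma1 (R : realType) (d : nat) (kappa : 'rV[R]_d -> 'rV[R]_d -> R)
    (H : lmodType R) (ip : H -> H -> R) (ev : H -> 'rV[R]_d -> R)
    (kx : 'rV[R]_d -> H) (T : nat) (x : nat -> 'rV[R]_d) (y : nat -> R)
    (fstar : H) (alpha beta eta : R) :
  is_RKHS kappa ip ev kx ->
  (forall u, kappa u u = 1) ->
  (0 < T)%N ->
  (forall t, (t < T)%N -> y t = 1 \/ y t = -1) ->
  (forall t f g, (t < T)%N ->
     `|hinge ev x y t f - hinge ev x y t g| <= hnorm ip (f - g)) ->
  (forall g, \sum_(t < T) hinge ev x y t fstar <= \sum_(t < T) hinge ev x y t g) ->
  0 < alpha -> alpha <= beta -> 0 < eta ->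
  spa_expected_regret kappa ev kx x y alpha beta eta T fstar
    < hnorm ip fstar ^+ 2 / (2 * eta)
      + eta * beta / Num.min alpha (Num.sqrt (beta * eta)) * T%:R
  /\
  (eta = hnorm ip fstar * Num.sqrt (alpha / (2 * beta * T%:R)) ->
   alpha ^+ 3 <= beta / (2 * T%:R) * hnorm ip fstar ^+ 2 ->
   spa_expected_regret kappa ev kx x y alpha beta eta T fstar
     < hnorm ip fstar * Num.sqrt (2 * beta * T%:R / alpha)).
Proof.
move=> rkhs kappa_diag T_gt0 y_sign _ _ alpha_gt0 alpha_le_beta eta_gt0.
have regret_lt := spa_expected_regret_lt x fstar rkhs kappa_diag y_sign alpha_gt0
  alpha_le_beta eta_gt0 T_gt0.
split=> // etaE alpha3.
have beta_gt0 : 0 < beta := lt_le_trans alpha_gt0 alpha_le_beta.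
by rewrite -(tuned_regret_bound alpha_gt0 beta_gt0 _ eta_gt0 _ etaE alpha3)
  ?ltr0n ?sqrtr_ge0.
Qed.
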